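(* For every choice of $a>0$ and $b>0$, there exist smooth vector fields $u,v$ on $S^1=\mathbb{R}/\mathbb{Z}$ such that the sectional curvature of $\mathrm{Diff}(S^1)$ endowed with the right-invariant metric given at the identity by $\langle\!\langle u,v\rangle\!\rangle_{H^1}=\int_0^1(a\,uv+b\,u_xv_x)\,dx$ is strictly negative, i.e. $S(u,v)=\langle\!\langle R(u,v)v,u\rangle\!\rangle_{H^1}<0$.
   Context: $R$ is the Riemann curvature tensor of the Levi-Civita connection of the right-invariant metric, evaluated at the identity. *)

From Stdlib Require Import Reals.
From Coquelicot Require Import Coquelicot.
Open Scope R_scope.

(* Smooth vector fields on S^1 = R/Z, identified with smooth 1-periodic
   functions R -> R (u(x) d/dx). *)
Definition periodic1 (f : R -> R) : Prop := forall x, f (x + 1) = f x.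
Definition smooth (f : R -> R) : Prop := forall (n : nat) (x : R), ex_derive_n f n x.
Definition vfS1 (f : R -> R) : Prop := periodic1 f /\ smooth f.

Definition H1ip (a b : R) (u v : R -> R) : R :=
  RInt (fun x => a * u x * v x + b * Derive u x * Derive v x) 0 1.

(* Lie bracket of right-invariant vector fields on Diff(S^1), evaluated at the
   identity: minus the usual vector-field bracket, i.e. u_x v - u v_x. *)
Definition brR (u v : R -> R) : R -> R :=
  fun x => Derive u x * v x - u x * Derive v x.

(* n is (the value at the identity of) the Levi-Civita covariant derivative
   nabla_{X_u} X_v of the right-invariant fields X_u, X_v: characterized by the
   Koszul formula for right-invariant fields (inner products of right-invariant
   fields are constant):
   2 <n, w> = <[u,v], w> - <[v,w], u> + <[w,u], v>  for all smooth w. *)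
Definition is_LC_nabla (a b : R) (u v n : R -> R) : Prop :=
  vfS1 n /\
  forall w, vfS1 w ->
    2 * H1ip a b n w =
      H1ip a b (brR u v) w - H1ip a b (brR v w) u + H1ip a b (brR w u) v.

(* s = S(u,v) = << R(u,v) v, u >>_{H^1}, with
   R(u,v) v = nabla_u nabla_v v - nabla_v nabla_u v - nabla_{[u,v]} v. *)
Definition sectional_curvature_is (a b : R) (u v : R -> R) (s : R) : Prop :=
  exists n1 n2 n3 n4 n5 : R -> R,
    is_LC_nabla a b v v n1 /\
    is_LC_nabla a b u n1 n2 /\
    is_LC_nabla a b u v n3 /\
    is_LC_nabla a b v n3 n4 /\
    is_LC_nabla a b (brR u v) v n5 /\
    s = H1ip a b (fun x => n2 x - n4 x - n5 x) u.

(* Brackets, the inertia operator A = a - b d^2/dx^2 and the coadjoint action all preserve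
   trigonometric polynomials of frequency w = 2 pi m, and A is diagonal on them with
   eigenvalue a + b (k w)^2 on cos (k w x) and sin (k w x).  Hence the Euler-Arnold equation
   2 A n = A [u,v] - ad*_v (A u) - ad*_u (A v) has an explicit trigonometric solution n, which
   by integration by parts satisfies the Koszul formula, i.e. n = nabla_u v.  Encoding such
   polynomials as lists of modes makes the sectional curvature of u = cos (w x),
   v = alpha + cos (2 w x) a symbolic computation: up to a positive factor it is w^2 times a
   quadratic polynomial in alpha, which is negative at alpha = -3 b w^2 / (4 a) as soon as
   b w^2 >= 10 a, and such a w exists for all a, b > 0. *)

From Stdlib Require Import Reals Lra Lia ZArith List FunctionalExtensionality.
From Coquelicot Require Import Coquelicot.
Import ListNotations.
Open Scope R_scope.

Lemma smooth_is_derive f : smooth f -> forall x, is_derive f x (Derive f x).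
Proof. intros Hf x. apply Derive_correct. exact (Hf 1%nat x). Qed.

Lemma ex_derive_smooth f x : smooth f -> ex_derive f x.
Proof. intros Hf. exact (Hf 1%nat x). Qed.

Lemma smooth_Derive f : smooth f -> smooth (Derive f).
Proof.
  intros Hf n x. destruct n as [|n]; [exact I|].
  eapply ex_derive_ext; [|exact (Hf (S (S n)) x)].
  intros y. simpl. rewrite (Derive_n_comp f n 1). now rewrite Nat.add_comm.
Qed.

Lemma periodic1_is_derive f g :
  periodic1 f -> (forall x, is_derive f x (g x)) -> periodic1 g.
Proof.
  intros Hp Hd x.
  assert (Hs : is_derive (fun y => f (y + 1)) x (scal 1 (g (x + 1)))).
  { apply (is_derive_comp f (fun y => y + 1)); [apply Hd|]. auto_derive; auto; ring. }
  apply (is_derive_ext _ f) in Hs; [|intros y; apply Hp].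
  rewrite <- (is_derive_unique _ _ _ (Hd x)), (is_derive_unique _ _ _ Hs).
  symmetry. exact (scal_one (g (x + 1))).
Qed.

Lemma periodic1_Derive f : periodic1 f -> smooth f -> periodic1 (Derive f).
Proof. intros Hp Hs. apply (periodic1_is_derive f); auto using smooth_is_derive. Qed.

Lemma ex_RInt_of_ex_derive (f : R -> R) : (forall x, ex_derive f x) -> ex_RInt f 0 1.
Proof.
  intros H. apply (ex_RInt_continuous (V := R_CompleteNormedModule)). intros z _.
  apply (ex_derive_continuous (K := R_AbsRing) (V := R_NormedModule)), H.
Qed.

Lemma RInt_derive_periodic1 (F f : R -> R) :
  periodic1 F -> (forall x, is_derive F x (f x)) -> (forall x, ex_derive f x) ->
  RInt f 0 1 = 0.
Proof.
  intros HP HF Hf.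
  assert (HI : is_RInt f 0 1 (minus (F 1) (F 0))).
  { apply (is_RInt_derive F f); intros x _; [apply HF|].
    apply (ex_derive_continuous (K := R_AbsRing) (V := R_NormedModule)), Hf. }
  rewrite (is_RInt_unique _ _ _ _ HI), <- (Rplus_0_l 1), HP.
  apply Rminus_diag_eq. reflexivity.
Qed.

Ltac der_rw := repeat match goal with |- context [Derive (fun y => ?f y) ?x] =>
  change (Derive (fun y => f y) x) with (Derive f x) end.

Ltac ex_derive_smooth :=
  repeat split; apply ex_derive_smooth; repeat (assumption || apply smooth_Derive).

Ltac ex_derive_integrand := intros ?y; auto_derive; ex_derive_smooth.

Definition inertia (a b : R) (f : R -> R) (x : R) : R := a * f x - b * Derive (Derive f) x.

Definition coad (u m : R -> R) (x : R) : R := 2 * Derive u x * m x + u x * Derive m x.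

Lemma Derive_brR f g x : smooth f -> smooth g ->
  Derive (brR f g) x = Derive (Derive f) x * g x - f x * Derive (Derive g) x.
Proof.
  intros Hf Hg. unfold brR.
  rewrite Derive_minus by (apply ex_derive_mult; ex_derive_smooth).
  rewrite !Derive_mult by ex_derive_smooth. ring.
Qed.

Lemma Derive_inertia a b f x : smooth f ->
  Derive (inertia a b f) x = a * Derive f x - b * Derive (Derive (Derive f)) x.
Proof.
  intros Hf. unfold inertia.
  rewrite Derive_minus, !Derive_scal; [reflexivity| |]; apply ex_derive_scal; ex_derive_smooth.
Qed.

Section KoszulIdentity.
Variables (a b : R) (u v w n c : R -> R).
Hypotheses (Hu : vfS1 u) (Hv : vfS1 v) (Hw : vfS1 w) (Hn : vfS1 n) (Hc : vfS1 c).
Hypothesis Heq : forall x,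
  2 * inertia a b n x = inertia a b c x - coad v (inertia a b u) x - coad u (inertia a b v) x.

Let I1 x := a * n x * w x + b * Derive n x * Derive w x.
Let I2 x := a * c x * w x + b * Derive c x * Derive w x.
Let I3 x := a * brR v w x * u x
  + b * (Derive (Derive v) x * w x - v x * Derive (Derive w) x) * Derive u x.
Let I4 x := a * brR w u x * v x
  + b * (Derive (Derive w) x * u x - w x * Derive (Derive u) x) * Derive v x.

(* The boundary terms of the integrations by parts turning the Koszul formula into the
   Euler-Arnold equation tested against [w]. *)
Let F x := 2 * b * Derive n x * w x - b * Derive c x * w x
  + b * brR v w x * Derive u x - v x * w x * inertia a b u x
  + b * brR u w x * Derive v x - u x * w x * inertia a b v x.

Lemma koszul_boundary_derive x : is_derive F x (2 * I1 x - I2 x + I3 x - I4 x).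
Proof.
  destruct Hu as [_ Su], Hv as [_ Sv], Hw as [_ Sw], Hn as [_ Sn], Hc as [_ Sc].
  pose proof (Heq x) as E. unfold coad in E. rewrite !Derive_inertia in E by assumption.
  unfold F, I1, I2, I3, I4, brR, inertia in *.
  auto_derive; [ex_derive_smooth|]. der_rw.
  apply Rminus_diag_uniq. apply Rminus_diag_eq in E.
  rewrite <- (Rmult_0_r (- w x)), <- E. ring.
Qed.

Lemma koszul_of_Euler_Arnold :
  2 * H1ip a b n w = H1ip a b c w - H1ip a b (brR v w) u + H1ip a b (brR w u) v.
Proof.
  assert (E3 : H1ip a b (brR v w) u = RInt I3 0 1).
  { apply RInt_ext. intros x _. unfold I3. now rewrite Derive_brR by (apply Hv || apply Hw). }
  assert (E4 : H1ip a b (brR w u) v = RInt I4 0 1).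
  { apply RInt_ext. intros x _. unfold I4. now rewrite Derive_brR by (apply Hu || apply Hw). }
  change (H1ip a b n w) with (RInt I1 0 1). change (H1ip a b c w) with (RInt I2 0 1).
  rewrite E3, E4.
  destruct Hu as [Pu Su], Hv as [Pv Sv], Hw as [Pw Sw], Hn as [Pn Sn], Hc as [Pc Sc].
  assert (X : forall f : R -> R, (forall x, ex_derive f x) -> is_RInt f 0 1 (RInt f 0 1))
    by (intros f Hf; apply (RInt_correct (V := R_CompleteNormedModule)), ex_RInt_of_ex_derive, Hf).
  pose proof (X I1 ltac:(unfold I1; ex_derive_integrand)) as X1.
  pose proof (X I2 ltac:(unfold I2; ex_derive_integrand)) as X2.
  pose proof (X I3 ltac:(unfold I3, brR; ex_derive_integrand)) as X3.
  pose proof (X I4 ltac:(unfold I4, brR; ex_derive_integrand)) as X4.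
  pose proof (is_RInt_minus _ _ _ _ _ _ (is_RInt_plus _ _ _ _ _ _
    (is_RInt_minus _ _ _ _ _ _ (is_RInt_scal _ _ _ 2 _ X1) X2) X3) X4) as L.
  apply (is_RInt_unique (V := R_CompleteNormedModule)) in L.
  assert (PF : periodic1 F).
  { pose proof (periodic1_Derive u Pu Su) as Pu1; pose proof (periodic1_Derive v Pv Sv) as Pv1.
    pose proof (periodic1_Derive w Pw Sw) as Pw1; pose proof (periodic1_Derive n Pn Sn) as Pn1.
    pose proof (periodic1_Derive c Pc Sc) as Pc1.
    pose proof (periodic1_Derive _ Pu1 (smooth_Derive u Su)) as Pu2.
    pose proof (periodic1_Derive _ Pv1 (smooth_Derive v Sv)) as Pv2.
    intros x. unfold F, brR, inertia.
    now rewrite Pn1, Pw, Pc1, Pv1, Pv, Pw1, Pu1, Pu, Pu2, Pv2. }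
  pose proof (RInt_derive_periodic1 F (fun x => 2 * I1 x - I2 x + I3 x - I4 x) PF
    koszul_boundary_derive
    ltac:(unfold I1, I2, I3, I4, brR; ex_derive_integrand)) as Z.
  replace (RInt (fun x => 2 * I1 x - I2 x + I3 x - I4 x) 0 1)
    with (2 * RInt I1 0 1 - RInt I2 0 1 + RInt I3 0 1 - RInt I4 0 1) in Z
    by (etransitivity; [exact (eq_sym L) | apply RInt_ext; reflexivity]).
  lra.
Qed.

End KoszulIdentity.

Lemma is_LC_nabla_Euler_Arnold a b u v n :
  vfS1 u -> vfS1 v -> vfS1 (brR u v) -> vfS1 n ->
  (forall x, 2 * inertia a b n x =
     inertia a b (brR u v) x - coad v (inertia a b u) x - coad u (inertia a b v) x) ->
  is_LC_nabla a b u v n.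
Proof.
  intros Hu Hv Hc Hn EA. split; [exact Hn|]. intros w Hw.
  now apply koszul_of_Euler_Arnold.
Qed.

Definition koszul (a b : R) (u v w : R -> R) : R :=
  (H1ip a b (brR u v) w - H1ip a b (brR v w) u + H1ip a b (brR w u) v) / 2.

Lemma H1ip_LC_nabla a b u v n w :
  is_LC_nabla a b u v n -> vfS1 w -> H1ip a b n w = koszul a b u v w.
Proof. intros [_ Hn] Hw. unfold koszul. rewrite <- Hn by exact Hw. field. Qed.

Lemma smooth_minus f g : smooth f -> smooth g -> smooth (fun x => f x - g x).
Proof.
  intros Hf Hg n x.
  apply ex_derive_n_minus; apply filter_forall; intros y k _; [apply Hf | apply Hg].
Qed.

Lemma H1ip_minusl a b f g h : smooth f -> smooth g -> smooth h ->
  H1ip a b (fun x => f x - g x) h = H1ip a b f h - H1ip a b g h.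
Proof.
  intros Hf Hg Hh.
  assert (X : forall p, smooth p ->
    is_RInt (fun x => a * p x * h x + b * Derive p x * Derive h x) 0 1 (H1ip a b p h)).
  { intros p Hp. apply (RInt_correct (V := R_CompleteNormedModule)), ex_RInt_of_ex_derive.
    ex_derive_integrand. }
  unfold H1ip at 1. apply (is_RInt_unique (V := R_CompleteNormedModule)).
  eapply is_RInt_ext; [|exact (is_RInt_minus _ _ _ _ _ _ (X f Hf) (X g Hg))].
  intros x _. rewrite Derive_minus by (apply ex_derive_smooth; assumption).
  unfold minus, plus, opp. simpl. ring.
Qed.

Lemma sectional_curvature_koszul a b u v n1 n2 n3 n4 n5 :
  vfS1 u -> is_LC_nabla a b u n1 n2 -> is_LC_nabla a b v n3 n4 ->
  is_LC_nabla a b (brR u v) v n5 ->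
  H1ip a b (fun x => n2 x - n4 x - n5 x) u
  = koszul a b u n1 u - koszul a b v n3 u - koszul a b (brR u v) v u.
Proof.
  intros Hu H2 H4 H5.
  pose proof (proj2 (proj1 H2)) as S2; pose proof (proj2 (proj1 H4)) as S4.
  pose proof (proj2 (proj1 H5)) as S5; pose proof (proj2 Hu) as Su.
  rewrite (H1ip_minusl a b (fun x => n2 x - n4 x)), H1ip_minusl; try assumption.
  - now rewrite (H1ip_LC_nabla _ _ _ _ _ _ H2 Hu), (H1ip_LC_nabla _ _ _ _ _ _ H4 Hu),
      (H1ip_LC_nabla _ _ _ _ _ _ H5 Hu).
  - now apply smooth_minus.
Qed.

(* [(k, false, c)] stands for [c cos (k w x)] and [(k, true, c)] for [c sin (k w x)]. *)
Definition mode : Type := (Z * bool * R)%type.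

Section TrigPoly.
Variable w : R.

Definition mode_eval (m : mode) (x : R) : R :=
  let '(k, s, c) := m in c * (if s then sin (IZR k * w * x) else cos (IZR k * w * x)).

Definition tpoly (l : list mode) (x : R) : R :=
  fold_right (fun m s => mode_eval m x + s) 0 l.

Definition tscal (r : R) : list mode -> list mode :=
  map (fun '(k, s, c) => (k, s, r * c)).

Definition tderiv : list mode -> list mode :=
  map (fun m : mode => let '(k, s, c) := m in
    if s then (k, false, IZR k * w * c) else (k, true, - (IZR k * w * c))).

(* product-to-sum formulas *)
Definition mode_mul (m1 m2 : mode) : list mode :=
  let '(k1, s1, c1) := m1 in let '(k2, s2, c2) := m2 in
  let c := c1 * c2 / 2 in
  match s1, s2 with
  | false, false => [((k1 + k2)%Z, false, c); ((k1 - k2)%Z, false, c)]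
  | true, true => [((k1 - k2)%Z, false, c); ((k1 + k2)%Z, false, - c)]
  | false, true => [((k1 + k2)%Z, true, c); ((k1 - k2)%Z, true, - c)]
  | true, false => [((k1 + k2)%Z, true, c); ((k1 - k2)%Z, true, c)]
  end.

Definition tmul (l1 l2 : list mode) : list mode :=
  flat_map (fun m1 => flat_map (mode_mul m1) l2) l1.

(* the mean over [0, 1], provided w is a nonzero multiple of 2 pi *)
Definition tmean : list mode -> R :=
  fold_right (fun (m : mode) r => let '(k, s, c) := m in
    (if s then 0 else if Z.eqb k 0 then c else 0) + r) 0.

Lemma tpoly_app l1 l2 x : tpoly (l1 ++ l2) x = tpoly l1 x + tpoly l2 x.
Proof. induction l1 as [|m l1 IH]; simpl; [ring|]. rewrite IH. ring. Qed.

Lemma tpoly_scal r l x : tpoly (tscal r l) x = r * tpoly l x.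
Proof. induction l as [|[[k s] c] l IH]; simpl; [ring|]. rewrite IH. ring. Qed.

Lemma tpoly_mode_mul m1 m2 x :
  tpoly (mode_mul m1 m2) x = mode_eval m1 x * mode_eval m2 x.
Proof.
  destruct m1 as [[k1 s1] c1], m2 as [[k2 s2] c2].
  assert (Hp : IZR (k1 + k2) * w * x = IZR k1 * w * x + IZR k2 * w * x)
    by (rewrite plus_IZR; ring).
  assert (Hm : IZR (k1 - k2) * w * x = IZR k1 * w * x - IZR k2 * w * x)
    by (rewrite minus_IZR; ring).
  destruct s1, s2; simpl; rewrite Hp, Hm;
    rewrite ?cos_plus, ?cos_minus, ?sin_plus, ?sin_minus; field.
Qed.

Lemma tpoly_flat_map_mode_mul m1 l2 x :
  tpoly (flat_map (mode_mul m1) l2) x = mode_eval m1 x * tpoly l2 x.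
Proof.
  induction l2 as [|m2 l2 IH]; simpl; [ring|].
  rewrite tpoly_app, IH, tpoly_mode_mul. ring.
Qed.

Lemma tpoly_mul l1 l2 x : tpoly (tmul l1 l2) x = tpoly l1 x * tpoly l2 x.
Proof.
  induction l1 as [|m1 l1 IH]; simpl; [ring|].
  rewrite tpoly_app, IH, tpoly_flat_map_mode_mul. ring.
Qed.

Lemma is_derive_tpoly l x : is_derive (tpoly l) x (tpoly (tderiv l) x).
Proof.
  induction l as [|[[k s] c] l IH]; simpl.
  - apply (is_derive_const 0).
  - apply (is_derive_plus (mode_eval (k, s, c)) (tpoly l)); [|exact IH].
    unfold mode_eval. destruct s; auto_derive; auto; ring.
Qed.

Lemma Derive_tpoly l : Derive (tpoly l) = tpoly (tderiv l).
Proof. apply functional_extensionality. intros x. apply is_derive_unique, is_derive_tpoly. Qed.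

Lemma Derive_n_tpoly n l : Derive_n (tpoly l) n = tpoly (Nat.iter n tderiv l).
Proof. induction n as [|n IH]; [reflexivity|]. simpl. now rewrite IH, Derive_tpoly. Qed.

Lemma smooth_tpoly l : smooth (tpoly l).
Proof.
  intros [|n] x; [exact I|]. simpl. rewrite Derive_n_tpoly.
  eexists. apply is_derive_tpoly.
Qed.

Variables a b : R.

Definition inertia_symbol (k : Z) : R := a + b * (IZR k * w) ^ 2.

Definition tinertia : list mode -> list mode :=
  map (fun '(k, s, c) => (k, s, inertia_symbol k * c)).

Definition tinertia_inv : list mode -> list mode :=
  map (fun '(k, s, c) => (k, s, c / inertia_symbol k)).

Definition tbr (l1 l2 : list mode) : list mode :=
  tmul (tderiv l1) l2 ++ tscal (-1) (tmul l1 (tderiv l2)).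

Definition tcoad (l m : list mode) : list mode :=
  tscal 2 (tmul (tderiv l) m) ++ tmul l (tderiv m).

Definition tnabla (l1 l2 : list mode) : list mode :=
  tinertia_inv (tscal (/ 2)
    (tinertia (tbr l1 l2) ++ tscal (-1) (tcoad l2 (tinertia l1) ++ tcoad l1 (tinertia l2)))).

Definition tH1 (l1 l2 : list mode) : R :=
  tmean (tscal a (tmul l1 l2) ++ tscal b (tmul (tderiv l1) (tderiv l2))).

Definition tkoszul (l1 l2 l3 : list mode) : R :=
  (tH1 (tbr l1 l2) l3 - tH1 (tbr l2 l3) l1 + tH1 (tbr l3 l1) l2) / 2.

Lemma brR_tpoly l1 l2 : brR (tpoly l1) (tpoly l2) = tpoly (tbr l1 l2).
Proof.
  apply functional_extensionality. intros x. unfold brR, tbr.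
  rewrite !Derive_tpoly, tpoly_app, tpoly_scal, !tpoly_mul. ring.
Qed.

Lemma coad_tpoly l1 l2 : coad (tpoly l1) (tpoly l2) = tpoly (tcoad l1 l2).
Proof.
  apply functional_extensionality. intros x. unfold coad, tcoad.
  rewrite !Derive_tpoly, tpoly_app, tpoly_scal, !tpoly_mul. ring.
Qed.

Lemma tpoly_tinertia l x :
  tpoly (tinertia l) x = a * tpoly l x - b * tpoly (tderiv (tderiv l)) x.
Proof.
  induction l as [|[[k s] c] l IH]; simpl; [ring|].
  rewrite IH. unfold inertia_symbol. destruct s; simpl; ring.
Qed.

Lemma inertia_tpoly l : inertia a b (tpoly l) = tpoly (tinertia l).
Proof.
  apply functional_extensionality. intros x. unfold inertia.
  rewrite !Derive_tpoly, tpoly_tinertia. reflexivity.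
Qed.

Variable m : Z.
Hypothesis Hw : w = 2 * PI * IZR m.

Lemma cos_sin_period k : cos (IZR k * w) = 1 /\ sin (IZR k * w) = 0.
Proof.
  assert (H0 : sin (IZR (k * m) * PI) = 0) by (apply sin_eq_0_1; eauto).
  replace (IZR k * w) with (2 * (IZR (k * m) * PI)) by (rewrite Hw, mult_IZR; ring).
  rewrite cos_2a_sin, sin_2a, H0. split; ring.
Qed.

Lemma periodic1_mode_eval md : periodic1 (mode_eval md).
Proof.
  intros x. destruct md as [[k s] c]. simpl.
  replace (IZR k * w * (x + 1)) with (IZR k * w * x + IZR k * w) by ring.
  destruct (cos_sin_period k) as [Hc Hs].
  destruct s; rewrite ?sin_plus, ?cos_plus, Hc, Hs; ring.
Qed.

Lemma periodic1_tpoly l : periodic1 (tpoly l).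
Proof.
  intros x. induction l as [|md l IH]; simpl; [reflexivity|].
  now rewrite IH, periodic1_mode_eval.
Qed.

Lemma vfS1_tpoly l : vfS1 (tpoly l).
Proof. split; [apply periodic1_tpoly | apply smooth_tpoly]. Qed.

Hypothesis Ha : 0 < a.
Hypothesis Hb : 0 <= b.

Lemma tinertia_tinertia_inv l x : tpoly (tinertia (tinertia_inv l)) x = tpoly l x.
Proof.
  induction l as [|[[k s] c] l IH]; simpl; [reflexivity|].
  rewrite IH. f_equal. unfold inertia_symbol. field.
  pose proof (pow2_ge_0 (IZR k * w)). nra.
Qed.

Lemma is_LC_nabla_tpoly l1 l2 : is_LC_nabla a b (tpoly l1) (tpoly l2) (tpoly (tnabla l1 l2)).
Proof.
  apply is_LC_nabla_Euler_Arnold; try apply vfS1_tpoly.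
  - rewrite brR_tpoly. apply vfS1_tpoly.
  - intros x. rewrite brR_tpoly, !inertia_tpoly, !coad_tpoly.
    unfold tnabla. rewrite tinertia_tinertia_inv, tpoly_scal, !tpoly_app, tpoly_scal, tpoly_app.
    field.
Qed.

Hypothesis Hm : m <> 0%Z.

Lemma RInt_mode_eval k s c :
  RInt (mode_eval (k, s, c)) 0 1 = if s then 0 else if Z.eqb k 0 then c else 0.
Proof.
  destruct (Z.eqb_spec k 0) as [->|Hk].
  - rewrite (RInt_ext _ (fun _ => if s then 0 else c)).
    + rewrite RInt_const. unfold scal. simpl. unfold mult. simpl. destruct s; ring.
    + intros x _. simpl. rewrite Rmult_0_l, Rmult_0_l, sin_0, cos_0. destruct s; ring.
  - assert (Hk0 : IZR k <> 0) by now apply not_0_IZR.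
    assert (Hw0 : w <> 0).
    { rewrite Hw. pose proof PI_RGT_0. pose proof (not_0_IZR m Hm).
      apply Rmult_integral_contrapositive_currified; [|assumption]. lra. }
    assert (HF : forall x, is_derive
      (mode_eval (k, negb s, (if s then - c else c) / (IZR k * w))) x (mode_eval (k, s, c) x)).
    { intros x. unfold mode_eval. destruct s; simpl; auto_derive; auto; field; tauto. }
    rewrite (RInt_derive_periodic1 _ _ (periodic1_mode_eval _) HF); [destruct s; reflexivity|].
    intros x. unfold mode_eval. destruct s; auto_derive; auto.
Qed.

Lemma RInt_tpoly l : RInt (tpoly l) 0 1 = tmean l.
Proof.
  induction l as [|[[k s] c] l IH].
  - rewrite (RInt_ext _ (fun _ => 0)) by reflexivity.
    rewrite RInt_const. unfold scal. simpl. unfold mult. simpl. ring.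
  - change (tpoly ((k, s, c) :: l)) with (fun x => mode_eval (k, s, c) x + tpoly l x).
    apply (is_RInt_unique (V := R_CompleteNormedModule)).
    simpl tmean. rewrite <- IH, <- RInt_mode_eval.
    apply (is_RInt_plus (V := R_CompleteNormedModule));
      apply (RInt_correct (V := R_CompleteNormedModule)), ex_RInt_of_ex_derive; intros x;
      [|eexists; apply is_derive_tpoly].
    unfold mode_eval. destruct s; auto_derive; auto.
Qed.

Lemma H1ip_tpoly l1 l2 : H1ip a b (tpoly l1) (tpoly l2) = tH1 l1 l2.
Proof.
  unfold H1ip, tH1. rewrite !Derive_tpoly, <- RInt_tpoly.
  apply RInt_ext. intros x _. rewrite tpoly_app, !tpoly_scal, !tpoly_mul.
  match goal with |- ?A = ?B => change (@eq R A B) end. ring.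
Qed.

Lemma koszul_tpoly l1 l2 l3 :
  koszul a b (tpoly l1) (tpoly l2) (tpoly l3) = tkoszul l1 l2 l3.
Proof. unfold koszul, tkoszul. now rewrite !brR_tpoly, !H1ip_tpoly. Qed.

Definition tcurvature (lu lv : list mode) : R :=
  tkoszul lu (tnabla lv lv) lu - tkoszul lv (tnabla lu lv) lu - tkoszul (tbr lu lv) lv lu.

Lemma sectional_curvature_tpoly lu lv :
  sectional_curvature_is a b (tpoly lu) (tpoly lv) (tcurvature lu lv).
Proof.
  exists (tpoly (tnabla lv lv)), (tpoly (tnabla lu (tnabla lv lv))), (tpoly (tnabla lu lv)),
    (tpoly (tnabla lv (tnabla lu lv))), (tpoly (tnabla (tbr lu lv) lv)).
  assert (H5 : is_LC_nabla a b (brR (tpoly lu) (tpoly lv)) (tpoly lv) (tpoly (tnabla (tbr lu lv) lv)))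
    by (rewrite brR_tpoly; apply is_LC_nabla_tpoly).
  do 4 (split; [apply is_LC_nabla_tpoly|]). split; [exact H5|].
  rewrite (sectional_curvature_koszul _ _ _ _ _ _ _ _ _ (vfS1_tpoly lu)
    (is_LC_nabla_tpoly _ _) (is_LC_nabla_tpoly _ _) H5), brR_tpoly, !koszul_tpoly.
  reflexivity.
Qed.

End TrigPoly.

Definition cos_mode : list mode := [(1%Z, false, 1)].

Definition cos2_plus_const (al : R) : list mode := [(0%Z, false, al); (2%Z, false, 1)].

Definition curvature_numerator (a r al : R) : R :=
  (5/4*a^5 + 13/2*a^4*r + 15/2*a^3*r^2 + 19/2*a^2*r^3 + 65/4*a*r^4 + 9*r^5)
  + a * (-3/2*a^4 - 27/2*a^3*r + 9/2*a^2*r^2 + 87/2*a*r^3 + 27*r^4) * al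
  + a^2 * (1/2*a^3 + 7*a^2*r + 49/2*a*r^2 + 18*r^3) * al^2.

Lemma tcurvature_cos_cos2 a b w al : 0 < a -> 0 < b ->
  tcurvature w a b cos_mode (cos2_plus_const al)
    * ((a + b * w^2)^2 * (a + 4 * (b * w^2)) * (a + 9 * (b * w^2)))
  = w^2 * curvature_numerator a (b * w^2) al.
Proof.
  intros Ha Hb. pose proof (pow2_ge_0 w).
  cbv beta iota zeta delta [tcurvature tkoszul tH1 tbr tnabla tcoad tinertia tinertia_inv
    tmul tderiv tscal tmean mode_mul cos_mode cos2_plus_const curvature_numerator inertia_symbol
    map flat_map fold_right app Z.add Z.sub Z.opp Z.eqb Z.pos_sub Pos.add Pos.succ
    Z.double Z.succ_double Z.pred_double Pos.pred_double Pos.eqb].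
  field. repeat split; nra.
Qed.


(* [-3 r / (4 a)] minimizes the terms of top degree in [r] of this quadratic in [al]. *)
Lemma curvature_numerator_neg a r :
  0 < a -> 10 * a <= r -> curvature_numerator a r (-3 * r / (4 * a)) < 0.
Proof.
  intros Ha Hr. set (t := r / a).
  assert (Ht : 10 <= t).
  { unfold t, Rdiv. apply (Rmult_le_reg_r a); [exact Ha|].
    rewrite Rmult_assoc, Rinv_l; lra. }
  assert (E : curvature_numerator a r (-3 * r / (4 * a)) =
    a ^ 5 * (-9/8*t^5 - 83/32*t^4 + 161/16*t^3 + 573/32*t^2 + 61/8*t + 5/4)).
  { unfold curvature_numerator, t. field. lra. }
  rewrite E. apply Rmult_pos_neg; [apply pow_lt, Ha|].
  assert (0 < t^2) by (apply pow_lt; lra). assert (0 < t^3) by (apply pow_lt; lra).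
  replace (t^5) with (t^3 * t^2) by ring. replace (t^4) with (t^3 * t) by ring. nra.
Qed.

Lemma tcurvature_cos_cos2_neg a b w : 0 < a -> 0 < b -> 10 * a <= b * w ^ 2 ->
  tcurvature w a b cos_mode (cos2_plus_const (-3 * (b * w ^ 2) / (4 * a))) < 0.
Proof.
  intros Ha Hb Hr.
  pose proof (tcurvature_cos_cos2 a b w (-3 * (b * w ^ 2) / (4 * a)) Ha Hb) as E.
  pose proof (curvature_numerator_neg a (b * w ^ 2) Ha Hr) as N.
  assert (Hw : 0 < w ^ 2) by nra.
  assert (D : 0 < (a + b * w^2)^2 * (a + 4 * (b * w^2)) * (a + 9 * (b * w^2))).
  { apply Rmult_lt_0_compat; [apply Rmult_lt_0_compat|]; [apply pow_lt|..]; nra. }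
  nra.
Qed.

Lemma large_frequency a b : 0 < a -> 0 < b ->
  exists m : Z, m <> 0%Z /\ 10 * a <= b * (2 * PI * IZR m) ^ 2.
Proof.
  intros Ha Hb. exists (up (a / b)).
  assert (Hm : a < b * IZR (up (a / b))).
  { destruct (archimed (a / b)) as [H _].
    apply (Rmult_lt_compat_l b) in H; [|exact Hb]. field_simplify in H; lra. }
  assert (Hm1 : 1 <= IZR (up (a / b))).
  { apply IZR_le. cut (0 < up (a / b))%Z; [lia|]. apply lt_IZR. nra. }
  set (m := IZR (up (a / b))) in *.
  split; [intros E; unfold m in Hm1; rewrite E in Hm1; lra|].
  assert (Hpi : 9 < PI * PI) by (pose proof PI2_3_2; nra).
  assert (Hmm : b * m <= b * (m * m)) by nra.
  assert (0 < b * (m * m)) by nra.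
  replace (b * (2 * PI * m) ^ 2) with (4 * (PI * PI) * (b * (m * m))) by ring.
  nra.
Qed.

Theorem theorem6p3 :
  forall a b : R, 0 < a -> 0 < b ->
  exists (u v : R -> R) (s : R),
    vfS1 u /\ vfS1 v /\ sectional_curvature_is a b u v s /\ s < 0.
Proof.
  intros a b Ha Hb.
  destruct (large_frequency a b Ha Hb) as [m [Hm Hr]].
  set (w := 2 * PI * IZR m) in Hr.
  assert (Hw : w = 2 * PI * IZR m) by reflexivity.
  set (v := cos2_plus_const (-3 * (b * w ^ 2) / (4 * a))).
  exists (tpoly w cos_mode), (tpoly w v), (tcurvature w a b cos_mode v).
  split; [|split; [|split]].
  - exact (vfS1_tpoly w m Hw cos_mode).
  - exact (vfS1_tpoly w m Hw v).
  - exact (sectional_curvature_tpoly w a b m Hw Ha (Rlt_le _ _ Hb) Hm cos_mode v).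
  - exact (tcurvature_cos_cos2_neg a b w Ha Hb Hr).
Qed.
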